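(* Let $\omega\in\mathbb{R}^n$ be resonant of order $r\ge1$. Then there exist a matrix $A\in GL_n(\mathbb{Z})$ and positive integers $d_1,\dots,d_r$ with $d_i$ dividing $d_{i+1}$ for $1\le i<r$, such that $(d_1e_1,\dots,d_re_r)$ is a basis of the resonance module $R(A\omega)$, where $(e_1,\dots,e_n)$ is the standard basis of $\mathbb{R}^n$. In particular $A\omega=(w/T,\omega')\in\mathbb{Q}^r\times\mathbb{R}^{n-r}$, where $\omega'\in\mathbb{R}^{n-r}$ is non-resonant and $w/T\in\mathbb{Q}^r$ is a rational vector of period $T=d_r$. When $\omega$ is rational (i.e. $r=n$), one obtains $n$ integers $d_1|d_2|\cdots|d_n$ with $d_n$ equal to the period of $\omega$, and a matrix $A\in GL_n(\mathbb{Z})$ such that $A\omega=(a_1/d_1,a_2/d_2,\dots,a_n/d_n)$ with each fraction $a_i/d_i$ irreducible ($a_i\in\mathbb{Z}$, $\gcd(a_i,d_i)=1$).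
   Context: For $\omega\in\mathbb{R}^m$, the resonance module $R(\omega)$ is the subgroup $\{k\in\mathbb{Z}^m:\langle k,\omega\rangle\in\mathbb{Z}\}$ of $\mathbb{Z}^m$; its rank is the resonance order of $\omega$. The vector $\omega$ is resonant if $R(\omega)\ne\{0\}$, non-resonant otherwise. A rational vector (all coordinates rational) has period equal to the least common denominator of its coordinates. *)

From HB Require Import structures.
From mathcomp Require Import all_boot all_order all_algebra.
From mathcomp Require Import reals.
Set Implicit Arguments. Unset Strict Implicit. Unset Printing Implicit Defensive.
Import Order.TTheory GRing.Theory Num.Theory.
Local Open Scope ring_scope.

(* Vectors of R^n and Z^n are column vectors 'cV_n, coordinates indexed 0..n-1. *)

Definition dotZ (R : realType) n (k : 'cV[int]_n) (w : 'cV[R]_n) : R :=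
  \sum_(i < n) (k i 0)%:~R * w i 0.

Definition in_resonance (R : realType) n (w : 'cV[R]_n) (k : 'cV[int]_n) : Prop :=
  dotZ k w \is a Num.int.

Definition resonant (R : realType) n (w : 'cV[R]_n) : Prop :=
  exists k : 'cV[int]_n, k != 0 /\ in_resonance w k.

Definition nonresonant (R : realType) n (w : 'cV[R]_n) : Prop :=
  forall k : 'cV[int]_n, in_resonance w k -> k = 0.

Definition Zfree n m (v : 'I_m -> 'cV[int]_n) : Prop :=
  forall c : 'I_m -> int, \sum_(i < m) c i *: v i = 0 -> forall i, c i = 0.

Definition subgroup_rank n (S : 'cV[int]_n -> Prop) (r : nat) : Prop :=
  (exists v : 'I_r -> 'cV[int]_n, (forall i, S (v i)) /\ Zfree v) /\
  (forall v : 'I_r.+1 -> 'cV[int]_n, (forall i, S (v i)) -> ~ Zfree v).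

Definition resonance_order (R : realType) n (w : 'cV[R]_n) (r : nat) : Prop :=
  subgroup_rank (in_resonance w) r.

Definition is_Zbasis n m (S : 'cV[int]_n -> Prop) (b : 'I_m -> 'cV[int]_n) : Prop :=
  Zfree b /\ (forall i, S (b i)) /\
  (forall k, S k -> exists c : 'I_m -> int, k = \sum_(i < m) c i *: b i).

Definition stdvec n (i : nat) : 'cV[int]_n := \col_(j < n) ((j : nat) == i)%:R.

Definition actZ (R : realType) n (A : 'M[int]_n) (w : 'cV[R]_n) : 'cV[R]_n :=
  map_mx (fun z : int => z%:~R) A *m w.

Definition coords (R : realType) n (v : 'cV[R]_n) : seq R :=
  [seq v j 0 | j <- enum 'I_n].

Definition rational_vec (R : realType) n (v : 'cV[R]_n) : Prop :=
  forall i, exists q : rat, v i 0 = ratr q.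

Definition is_period (R : realType) n (v : 'cV[R]_n) (T : nat) : Prop :=
  (0 < T)%N /\ (forall i, T%:R * v i 0 \is a Num.int) /\
  (forall T' : nat, (0 < T')%N -> (forall i, T'%:R * v i 0 \is a Num.int) -> (T <= T')%N).

From HB Require Import structures.
From mathcomp Require Import all_boot all_order all_algebra.
From mathcomp Require Import reals.
From mathcomp Require Import zify.
From Stdlib Require Import Classical.
Import Order.TTheory GRing.Theory Num.Theory.
Local Open Scope ring_scope.
Set Implicit Arguments. Unset Strict Implicit. Unset Printing Implicit Defensive.

(* A subgroup of Z^n is the column span of an integer matrix G. Writing G = P D Q in
   Smith normal form and taking A = P^T, the pairing <k, A w> = <A^T k, w> shows that the
   resonance module of A w is the diagonal lattice d_1 Z x ... x d_n Z with d_1 | d_2 | ...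
   The nonzero d_i are the first ones, and their number is the rank r of the module. The
   rest is read off coordinatewise, since d_i divides z exactly when z (A w)_i is an
   integer: the first r coordinates of A w have exact denominators d_i, the others form a
   non-resonant vector, and w is rational iff r = n. *)

Lemma ex_minimal_nat (P : nat -> Prop) :
  (exists m, P m) -> exists m, P m /\ forall k, P k -> (m <= k)%N.
Proof.
move=> [m Pm]; elim/ltn_ind: m Pm => m IH Pm.
have [[k Pk k_lt_m] | no_less] := classic (exists2 k, P k & (k < m)%N).
  exact: IH k k_lt_m Pk.
exists m; split=> // k Pk; rewrite leqNgt; apply/negP => k_lt_m.
by apply: no_less; exists k.
Qed.

Definition Zsubgroup n (S : 'cV[int]_n -> Prop) : Prop :=
  S 0 /\ (forall x y, S x -> S y -> S (x - y)).

Section Zsubgroup.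
Variables (n : nat) (S : 'cV[int]_n -> Prop).
Hypothesis S_subgroup : Zsubgroup S.

Lemma Zsubgroup0 : S 0. Proof. by case: S_subgroup. Qed.

Lemma ZsubgroupB x y : S x -> S y -> S (x - y).
Proof. by case: S_subgroup => _; apply. Qed.

Lemma ZsubgroupN x : S x -> S (- x).
Proof. by move=> Sx; rewrite -sub0r; apply: ZsubgroupB => //; apply: Zsubgroup0. Qed.

Lemma ZsubgroupD x y : S x -> S y -> S (x + y).
Proof. by move=> Sx Sy; rewrite -[y]opprK; apply: ZsubgroupB => //; apply: ZsubgroupN. Qed.

Lemma ZsubgroupZ (z : int) x : S x -> S (z *: x).
Proof.
move=> Sx; have SMn m : S (x *+ m).
  by elim: m => [|m IH]; rewrite ?mulr0n ?mulrS; [apply: Zsubgroup0 | apply: ZsubgroupD].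
by case: z => m; rewrite ?NegzE ?scaleNr -natz scaler_nat //; apply: ZsubgroupN.
Qed.

Lemma Zsubgroup_coord_generator (i : 'I_n) : (exists k, S k /\ k i 0 != 0) ->
  exists u g, [/\ S u, u i 0 = g%:Z, (0 < g)%N & forall k, S k -> (g%:Z %| k i 0%R)%Z].
Proof.
move=> [k [Sk ki_neq0]].
pose P g := (0 < g)%N /\ exists u, S u /\ u i 0 = g%:Z.
have [|g [[g_gt0 [u [Su ug]]] g_min]] := ex_minimal_nat (P := P).
  exists (absz (k i 0)); split; first by rewrite absz_gt0.
  have [ki_lt0|ki_ge0] := ltrP (k i 0) 0.
    by exists (- k); split; [apply: ZsubgroupN | rewrite mxE abszE ltr0_norm].
  by exists k; split; rewrite // abszE ger0_norm.
exists u, g; split=> // k' Sk'; apply/dvdz_mod0P/eqP/negPn/negP => rem_neq0.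
pose q := (k' i 0%R %/ g%:Z)%Z.
have g_neq0 : g%:Z != 0 by rewrite eqz_nat -lt0n.
have rem_ge0 := modz_ge0 (k' i 0) g_neq0.
have : P (absz (k' i 0%R %% g%:Z)%Z).
  split; first by rewrite absz_gt0.
  exists (k' - q *: u); split; first by apply: ZsubgroupB => //; apply: ZsubgroupZ.
  by rewrite !mxE ug abszE ger0_norm // {1}(divz_eq (k' i 0) g%:Z) /q mulrC addrK.
move/g_min; rewrite leqNgt => /negP; apply.
by rewrite -ltz_nat abszE ger0_norm // ltz_pmod // ltz_nat.
Qed.

End Zsubgroup.

Lemma mul_col_replace n (G : 'M[int]_n) (u c : 'cV[int]_n) (j0 : 'I_n) :
  (forall i, G i j0 = 0) ->
  (\matrix_(i, j) (if j == j0 then u i 0 else G i j)) *m c = G *m c + c j0 0 *: u.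
Proof.
move=> G_j0; apply/matrixP => i k; rewrite (ord1 k) !mxE (bigD1 j0) //= mxE eqxx.
rewrite [X in _ = X + _](bigD1 j0) //= G_j0 mul0r add0r mulrC addrC; congr (_ + _).
by apply: eq_bigr => j /negbTE j_neq; rewrite mxE j_neq.
Qed.

Lemma Zsubgroup_span_extend n (S : 'cV[int]_n -> Prop) (j0 : 'I_n) (G' : 'M[int]_n) :
  Zsubgroup S -> (forall i, G' i j0 = 0) ->
  (forall k, S k /\ k j0 0 = 0 <-> exists c, k = G' *m c) ->
  exists G : 'M[int]_n, (forall i j, j != j0 -> G i j = G' i j) /\
    forall k, S k <-> exists c, k = G *m c.
Proof.
move=> S_sub G'_j0 spanT.
have [Sj0|Sj0] := classic (exists k, S k /\ k j0 0 != 0); last first.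
  exists G'; split=> // k; rewrite -spanT; split=> [Sk | []//]; split=> //.
  by apply/eqP/negPn/negP => kj0; apply: Sj0; exists k.
have [u [g [Su ug g_gt0 g_dvd]]] := Zsubgroup_coord_generator S_sub Sj0.
pose G := \matrix_(i, j) (if j == j0 then u i 0 else G' i j).
have GE c : G *m c = G' *m c + c j0 0 *: u by apply: mul_col_replace.
exists G; split=> [i j /negbTE j_neq | k]; first by rewrite mxE j_neq.
split=> [Sk | [c ->]]; last first.
  rewrite GE; apply: ZsubgroupD (ZsubgroupZ S_sub _ Su) => //.
  by have [] := proj2 (spanT _) (ex_intro _ c erefl).
pose q := (k j0 0%R %/ g%:Z)%Z.
have [c kE] : exists c, k - q *: u = G' *m c.
  apply/spanT; split; first by apply: ZsubgroupB (ZsubgroupZ S_sub _ Su).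
  by rewrite !mxE ug divzK ?subrr ?g_dvd.
have G'_delta : G' *m delta_mx j0 ord0 = 0 :> 'cV_n.
  by apply/matrixP => i j; rewrite -colE !mxE G'_j0.
exists (c + (q - c j0 0) *: delta_mx j0 ord0).
rewrite GE mulmxDr -scalemxAr G'_delta scaler0 addr0 -kE !mxE eqxx mulr1.
by rewrite addrC subrK subrK.
Qed.

Lemma Zsubgroup_span_support n m : (m <= n)%N ->
  forall S : 'cV[int]_n -> Prop, Zsubgroup S ->
  (forall k, S k -> forall j : 'I_n, (m <= j)%N -> k j 0 = 0) ->
  exists G : 'M[int]_n, (forall i (j : 'I_n), (m <= j)%N -> G i j = 0) /\
    forall k, S k <-> exists c, k = G *m c.
Proof.
elim: m => [|m IH] m_le S S_sub S_supp.
  exists 0; split=> [i j _|k]; first by rewrite mxE.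
  split=> [Sk|[c ->]]; last by rewrite mul0mx; apply: Zsubgroup0.
  by exists 0; apply/matrixP => i j; rewrite (ord1 j) mul0mx mxE S_supp.
pose j0 : 'I_n := Ordinal m_le.
pose T k := S k /\ k j0 0 = 0.
have T_sub : Zsubgroup T.
  split; first by split; [apply: Zsubgroup0 | rewrite mxE].
  move=> x y [Sx xj0] [Sy yj0].
  by split; [apply: ZsubgroupB | rewrite !mxE xj0 yj0 subr0].
have T_supp k : T k -> forall j : 'I_n, (m <= j)%N -> k j 0 = 0.
  move=> [Sk kj0] j; rewrite leq_eqVlt => /orP [/eqP m_eq|]; last exact: S_supp.
  by rewrite (_ : j = j0) //; apply: val_inj.
have [G' [G'_supp spanT]] := IH (ltnW m_le) T T_sub T_supp.
have [G [GE spanS]] := Zsubgroup_span_extend S_sub (fun i => G'_supp i j0 (leqnn m)) spanT.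
exists G; split=> // i j m_lt_j; rewrite GE ?G'_supp ?(ltnW m_lt_j) //.
by rewrite -val_eqE /= gtn_eqF.
Qed.

Lemma Zsubgroup_col_span n (S : 'cV[int]_n -> Prop) : Zsubgroup S ->
  exists G : 'M[int]_n, forall k, S k <-> exists c, k = G *m c.
Proof.
move=> S_sub; have [|G [_ spanS]] := Zsubgroup_span_support (leqnn n) S_sub.
  by move=> k _ j; rewrite leqNgt ltn_ord.
by exists G.
Qed.

Lemma Zfree_mulmx n m (M : 'M[int]_n) (v : 'I_m -> 'cV[int]_n) :
  M \in unitmx -> Zfree v -> Zfree (fun i => M *m v i).
Proof.
move=> M_unit v_free c c_sum; apply: v_free.
have : invmx M *m (\sum_(i < m) c i *: (M *m v i)) = 0 by rewrite c_sum mulmx0.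
rewrite mulmx_sumr => sum0; rewrite -[RHS]sum0; apply: eq_bigr => i _.
by rewrite -scalemxAr mulKmx.
Qed.

Lemma Zfree_widen n m k (k_le : (k <= m)%N) (v : 'I_m -> 'cV[int]_n) :
  Zfree v -> Zfree (fun i : 'I_k => v (widen_ord k_le i)).
Proof.
move=> v_free c c_sum i.
pose c' (j : 'I_m) := if insub (val j) is Some i then c i else 0.
have c'E i' : c' (widen_ord k_le i') = c i' by rewrite /c' /= valK.
suff /v_free/(_ (widen_ord k_le i)) : \sum_(j < m) c' j *: v j = 0 by rewrite c'E.
rewrite (bigID (fun j : 'I_m => (j < k)%N)) /= [X in _ + X]big1 ?addr0; last first.
  by move=> j /negbTE j_ge; rewrite /c' insubF ?j_ge ?scale0r.
by rewrite (big_ord_narrow k_le) -[RHS]c_sum; apply: eq_bigr => j _; rewrite c'E.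
Qed.

Lemma subgroup_rank_ge n (S : 'cV[int]_n -> Prop) r s :
  subgroup_rank S r ->
  (exists v : 'I_s -> 'cV[int]_n, (forall i, S (v i)) /\ Zfree v) -> (s <= r)%N.
Proof.
move=> [_ r_max] [v [Sv v_free]]; rewrite leqNgt; apply/negP => r_lt_s.
apply: (r_max (fun i => v (widen_ord r_lt_s i))) => [i|]; first exact: Sv.
exact: (Zfree_widen (k_le := r_lt_s) v_free).
Qed.

Lemma subgroup_rank_unique n (S : 'cV[int]_n -> Prop) r s :
  subgroup_rank S r -> subgroup_rank S s -> r = s.
Proof.
move=> Sr Ss; apply/eqP; rewrite eqn_leq.
by rewrite (subgroup_rank_ge Ss (proj1 Sr)) (subgroup_rank_ge Sr (proj1 Ss)).
Qed.

Lemma subgroup_rank_transport n (S S' : 'cV[int]_n -> Prop) (M : 'M[int]_n) r :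
  M \in unitmx -> (forall k, S' k <-> S (M *m k)) ->
  subgroup_rank S r -> subgroup_rank S' r.
Proof.
move=> M_unit S'E [[v [Sv v_free]] r_max]; split.
  exists (fun i => invmx M *m v i); split; first by move=> i; apply/S'E; rewrite mulKVmx.
  by apply: Zfree_mulmx; rewrite ?unitmx_inv.
move=> u S'u u_free; apply: (r_max (fun i => M *m u i)); first by move=> i; apply/S'E.
exact: Zfree_mulmx.
Qed.

(* Writing the [s.+1 x s] coordinate matrix as [L *m D *m R'] in Smith normal form, the
   last row of [invmx L] is a nonzero relation among its rows, as the last row of [D] is 0. *)
Lemma not_Zfree_supported n s (s_le : (s <= n)%N) (v : 'I_s.+1 -> 'cV[int]_n) :
  (forall i (j : 'I_n), (s <= j)%N -> v i j 0 = 0) -> ~ Zfree v.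
Proof.
move=> v_supp v_free.
pose B : 'M[int]_(s.+1, s) := \matrix_(i, j) v i (widen_ord s_le j) 0.
have [L L_unit [R' _ [d _ BE]]] := int_Smith_normal_form B.
set D := \matrix_(i, j) _ in BE.
pose x := row ord_max (invmx L).
have xB : x *m B = 0.
  rewrite /x -row_mul BE -mulmxA mulKmx // row_mul.
  have -> : row ord_max D = 0 by apply/matrixP => i j; rewrite !mxE gtn_eqF ?mulr0n.
  by rewrite mul0mx.
have xL : x *m L = row ord_max 1%:M by rewrite /x -row_mul mulVmx.
have x0 : x = 0.
  apply/matrixP => i j; rewrite (ord1 i) [RHS]mxE; apply: (v_free (fun k => x 0 k)).
  apply/matrixP => p q; rewrite (ord1 q) summxE [RHS]mxE.
  under eq_bigr => k _ do rewrite mxE.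
  have [p_lt_s|p_ge_s] := ltnP p s; last by apply: big1 => k _; rewrite !mxE v_supp ?mulr0.
  have := congr1 (fun M : 'M[int]_(1, s) => M 0 (Ordinal p_lt_s)) xB.
  rewrite [RHS]mxE mxE => xBp; rewrite -[RHS]xBp.
  by apply: eq_bigr => k _; rewrite !mxE; congr (_ * v k _ _); apply: val_inj.
by have := congr1 (fun M : 'M[int]_(1, s.+1) => M 0 ord_max) xL; rewrite x0 mul0mx !mxE eqxx.
Qed.

Lemma Zsubgroup_Smith n (S : 'cV[int]_n -> Prop) : Zsubgroup S ->
  exists (P : 'M[int]_n) (d : nat -> nat), [/\ P \in unitmx,
    (forall i j, (i <= j)%N -> (d i %| d j)%N) &
    forall k, S (P *m k) <-> forall i : 'I_n, ((d i)%:Z %| k i 0%R)%Z].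
Proof.
move=> S_sub; have [G spanS] := Zsubgroup_col_span S_sub.
have [P P_unit [Q Q_unit [dl dl_sorted GE]]] := int_Smith_normal_form G.
set D := \matrix_(i, j) _ in GE.
have DE c (i : 'I_n) : (D *m c) i 0 = dl`_i * c i 0.
  rewrite !mxE (bigD1 i) //= big1 ?addr0 ?mxE ?eqxx ?mulr1n // => j.
  by rewrite -val_eqE /= eq_sym => /negbTE j_neq; rewrite mxE j_neq mulr0n mul0r.
exists P, (fun i => absz dl`_i); split=> // [i j i_le_j | k].
  have [j_lt|j_ge] := ltnP j (size dl); last by rewrite (nth_default 0 j_ge) dvdn0.
  apply: (sorted_leq_nth dvdz_trans dvdzz 0 dl_sorted) => //.
  by rewrite inE (leq_ltn_trans i_le_j j_lt).
have spanD : S (P *m k) <-> exists c, k = D *m c.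
  rewrite spanS; split=> [[c Pk] | [c ->]].
    by exists (Q *m c); apply: (can_inj (mulKmx P_unit)); rewrite Pk GE -!mulmxA.
  by exists (invmx Q *m c); rewrite GE -!mulmxA mulKVmx // mulmxA.
rewrite spanD; split=> [[c ->] i | k_dvd]; first by rewrite DE dvdz_mulr // /dvdz.
exists (\col_i (k i 0%R %/ dl`_i)%Z); apply/matrixP => i j.
by rewrite (ord1 j) DE mxE mulrC divzK //; apply: k_dvd.
Qed.

Lemma sum_stdvec_coord n m (c : 'I_m -> int) (f : 'I_m -> nat) (i : 'I_n) :
  (\sum_(j < m) c j *: stdvec n (f j)) i 0 = \sum_(j < m | f j == i) c j.
Proof.
rewrite summxE [RHS]big_mkcond; apply: eq_bigr => j _.
by rewrite !mxE eq_sym; case: (f j == i); rewrite ?mulr1 ?mulr0.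
Qed.

Section Pairing.
Variables (R : realType) (n : nat).
Implicit Types (k : 'cV[int]_n) (x : 'cV[R]_n).

Lemma dotZ0 x : dotZ 0 x = 0.
Proof. by rewrite /dotZ big1 // => i _; rewrite mxE mul0r. Qed.

Lemma dotZD k k' x : dotZ (k + k') x = dotZ k x + dotZ k' x.
Proof. by rewrite /dotZ -big_split; apply: eq_bigr => i _; rewrite !mxE rmorphD mulrDl. Qed.

Lemma dotZB k k' x : dotZ (k - k') x = dotZ k x - dotZ k' x.
Proof. by rewrite /dotZ -sumrB; apply: eq_bigr => i _; rewrite !mxE rmorphB mulrBl. Qed.

Lemma in_resonance_Zsubgroup x : Zsubgroup (in_resonance x).
Proof.
split=> [|k k']; first by rewrite /in_resonance dotZ0 rpred0.
by rewrite /in_resonance dotZB; apply: rpredB.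
Qed.

Lemma dotZ_actZ (A : 'M[int]_n) k x : dotZ k (actZ A x) = dotZ (A^T *m k) x.
Proof.
rewrite /dotZ /actZ; under eq_bigr => i _ do rewrite !mxE mulr_sumr.
rewrite exchange_big /=; apply: eq_bigr => j _.
rewrite !mxE rmorph_sum /= mulr_suml; apply: eq_bigr => i _.
by rewrite !mxE rmorphM /= mulrCA mulrA.
Qed.

Lemma coordsE x (i : 'I_n) : (coords x)`_i = x i 0.
Proof. by rewrite (nth_map i) ?size_enum_ord // nth_ord_enum. Qed.

Lemma dotZ_stdvec (c : int) (p : nat) x :
  dotZ (c *: stdvec n p) x = c%:~R * (coords x)`_p.
Proof.
have [p_lt|p_ge] := ltnP p n.
  rewrite /dotZ (bigD1 (Ordinal p_lt)) //= big1 => [|i]; last first.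
    by rewrite -val_eqE /= => /negbTE i_neq; rewrite !mxE i_neq mulr0 mul0r.
  by rewrite !mxE eqxx mulr1 addr0 (coordsE x (Ordinal p_lt)).
have -> : (coords x)`_p = 0 by rewrite nth_default // size_map size_enum_ord.
rewrite mulr0 /dotZ big1 // => i _.
by rewrite !mxE ltn_eqF ?mulr0 ?mul0r // (leq_trans (ltn_ord i) p_ge).
Qed.

Lemma actZ_coordsE (P : R -> Prop) (A : 'M[int]_n) x : A \in unitmx ->
  P 0 -> (forall y z, P y -> P z -> P (y + z)) ->
  (forall (c : int) y, P y -> P (c%:~R * y)) ->
  (forall i, P (actZ A x i 0)) <-> (forall i, P (x i 0)).
Proof.
move=> A_unit P0 PD PZ.
have closed (B : 'M[int]_n) (y : 'cV[R]_n) : (forall i, P (y i 0)) -> forall i, P (actZ B y i 0).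
  move=> Py i; rewrite mxE; apply: (big_ind P) => // j _.
  by rewrite mxE; apply: PZ.
split=> [/(closed (invmx A)) | /(closed A)] //.
by rewrite /actZ mulmxA -map_mxM mulVmx // map_mx1 mul1mx.
Qed.

Lemma rational_vec_actZ (A : 'M[int]_n) x :
  A \in unitmx -> rational_vec (actZ A x) <-> rational_vec x.
Proof.
move=> A_unit; apply: (actZ_coordsE (P := fun y => exists q : rat, y = ratr q)) => //.
- by exists 0; rewrite rmorph0.
- by move=> y z [q ->] [q' ->]; exists (q + q'); rewrite rmorphD.
- by move=> c y [q ->]; exists (c%:~R * q); rewrite rmorphM /= ratr_int.
Qed.

Lemma int_multiple_actZ (A : 'M[int]_n) x (T : R) : A \in unitmx ->
  (forall i, T * actZ A x i 0 \is a Num.int) <-> (forall i, T * x i 0 \is a Num.int).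
Proof.
move=> A_unit; apply: (actZ_coordsE (P := fun y => T * y \is a Num.int)) => //.
- by rewrite mulr0 rpred0.
- by move=> y z Ty Tz; rewrite mulrDr rpredD.
- by move=> c y Ty; rewrite mulrCA rpredM ?intr_int.
Qed.

Lemma resonance_order_actZ (A : 'M[int]_n) x r :
  A \in unitmx -> resonance_order x r -> resonance_order (actZ A x) r.
Proof.
move=> A_unit; apply: (subgroup_rank_transport (M := A^T)); first by rewrite unitmx_tr.
by move=> k; rewrite /in_resonance dotZ_actZ.
Qed.

Lemma resonance_Smith x : exists (A : 'M[int]_n) (d : nat -> nat), [/\ A \in unitmx,
    (forall i j, (i <= j)%N -> (d i %| d j)%N) &
    forall k, in_resonance (actZ A x) k <-> forall i : 'I_n, ((d i)%:Z %| k i 0%R)%Z].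
Proof.
have [P [d [P_unit d_dvd PE]]] := Zsubgroup_Smith (in_resonance_Zsubgroup x).
exists P^T, d; split; rewrite ?unitmx_tr // => k.
by rewrite -PE /in_resonance dotZ_actZ trmxK.
Qed.

End Pairing.

Section Denominators.
Variable R : realType.

Lemma floor_divE (y : R) (D : nat) : (0 < D)%N -> D%:R * y \is a Num.int ->
  y = (Num.floor (D%:R * y))%:~R / D%:R.
Proof. by move=> D_gt0 Dy_int; rewrite floorK // mulrC mulKf // pnatr_eq0 -lt0n. Qed.

(* If the integers [z] with [z y] integral are exactly the multiples of [D], then [D]
   divides [D / g] for [g] the gcd of [D] and the numerator, forcing [g = 1]. *)
Lemma coprimez_floor (y : R) (D : nat) : (0 < D)%N ->
  (forall z : int, (D%:Z %| z)%Z <-> z%:~R * y \is a Num.int) ->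
  coprimez (Num.floor (D%:R * y)) D.
Proof.
move=> D_gt0 D_denom; set a := Num.floor _.
have aE : a%:~R = D%:R * y by rewrite floorK //; apply/(D_denom D%:Z).
rewrite coprimezE /coprime; set g := gcdn _ _.
have g_gt0 : (0 < g)%N by rewrite gcdn_gt0 D_gt0 orbT.
have [m Dm] : exists m, D = (m * g)%N by exists (D %/ g)%N; rewrite divnK // dvdn_gcdr.
have m_gt0 : (0 < m)%N by move: D_gt0; rewrite Dm muln_gt0 => /andP [].
have my : (m%:Z)%:~R * y = ((a %/ g%:Z)%Z)%:~R :> R.
  apply: (mulIf (_ : g%:R != 0 :> R)); first by rewrite pnatr_eq0 -lt0n.
  rewrite -pmulrn mulrAC -natrM -Dm -aE [g%:R]pmulrn -intrM divzK //.
  exact: dvdn_gcdl.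
have /dvdn_leq : (D %| m)%N by apply/(D_denom m%:Z); rewrite my intr_int.
by move/(_ m_gt0); rewrite Dm; nia.
Qed.

Lemma is_period_dvd m (v : 'cV[R]_m) (T : nat) : (0 < T)%N ->
  (forall T' : nat, (forall i, T'%:R * v i 0 \is a Num.int) <-> (T %| T')%N) ->
  is_period v T.
Proof.
move=> T_gt0 v_int; split=> //; split=> [|T' T'_gt0 /v_int]; last exact: dvdn_leq.
exact/v_int.
Qed.

End Denominators.

Lemma dvdn_chain_pos_prefix n (d : nat -> nat) :
  (forall i j, (i <= j)%N -> (d i %| d j)%N) ->
  exists2 s, (s <= n)%N & forall i, (i < n)%N -> (0 < d i)%N = (i < s)%N.
Proof.
move=> d_dvd; have stop : exists m, (m == n) || (d m == 0%N) by exists n; rewrite eqxx.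
have [s s_stop s_min] := ex_minnP stop.
exists s => [|i i_lt]; first by apply: s_min; rewrite eqxx.
apply/idP/idP => [di_gt0 | i_lt_s].
  rewrite ltnNge; apply/negP => s_le_i; case/orP: s_stop => [/eqP s_eq | /eqP ds0].
    by move: i_lt; rewrite -s_eq ltnNge s_le_i.
  by move: (d_dvd _ _ s_le_i) di_gt0; rewrite ds0 dvd0n => /eqP ->.
rewrite lt0n; apply/negP => /eqP di0.
by have := s_min i; rewrite di0 eqxx orbT leqNgt i_lt_s => /(_ isT).
Qed.

Section DiagonalResonance.
Variables (R : realType) (n s : nat) (x : 'cV[R]_n) (d : nat -> nat).
Hypotheses (s_le_n : (s <= n)%N)
  (d_gt0 : forall i, (i < n)%N -> (0 < d i)%N = (i < s)%N)
  (x_res : forall k, in_resonance x k <-> forall i : 'I_n, ((d i)%:Z %| k i 0%R)%Z).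

Lemma resonance_coord (i : 'I_n) (z : int) :
  ((d i)%:Z %| z)%Z <-> z%:~R * x i 0 \is a Num.int.
Proof.
rewrite -coordsE -dotZ_stdvec -/(in_resonance _ _) x_res; split=> [dz j | /(_ i)].
  by rewrite !mxE; case: eqP => [/val_inj ->|_]; rewrite ?mulr1 ?mulr0 ?dvdz0.
by rewrite !mxE eqxx mulr1.
Qed.

Lemma d_eq0 (i : 'I_n) : (s <= i)%N -> d i = 0%N.
Proof. by move=> s_le_i; apply/eqP; rewrite -leqn0 leqNgt d_gt0 // -leqNgt. Qed.

Lemma resonance_Zbasis : is_Zbasis (in_resonance x) (fun i : 'I_s => (d i)%:Z *: stdvec n i).
Proof.
have coefE (c : 'I_s -> int) (p : 'I_n) :
    (\sum_(j < s) c j *: ((d j)%:Z *: stdvec n j)) p 0 =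
    \sum_(j < s | j == p :> nat) c j * (d j)%:Z.
  by rewrite -sum_stdvec_coord; under eq_bigr => j _ do rewrite scalerA.
have coef_lt (c : 'I_s -> int) (j : 'I_s) :
    (\sum_(j < s) c j *: ((d j)%:Z *: stdvec n j)) (widen_ord s_le_n j) 0 = c j * (d j)%:Z.
  by rewrite coefE (big_pred1 j) // => j'; rewrite /= val_eqE.
split=> [c sum0 i | ]; last split=> [i | k /x_res k_dvd].
- have /eqP := coef_lt c i; rewrite sum0 mxE eq_sym mulf_eq0 => /orP [/eqP //|].
  by rewrite eqz_nat -leqn0 leqNgt d_gt0 // (leq_trans (ltn_ord i)).
- apply/x_res => p; rewrite !mxE; have [pi | _] := eqVneq (p : nat) i.
    by rewrite pi mulr1.
  by rewrite mulr0 dvdz0.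
exists (fun i : 'I_s => (k (widen_ord s_le_n i) 0%R %/ d i)%Z).
apply/matrixP => p q; rewrite (ord1 q).
have [p_lt_s | p_ge_s] := ltnP p s.
  have -> : p = widen_ord s_le_n (Ordinal p_lt_s) by apply: val_inj.
  by rewrite coef_lt divzK //; apply: k_dvd.
rewrite coefE big_pred0 => [|j]; last by apply/negbTE; rewrite neq_ltn (leq_trans _ p_ge_s).
by have := k_dvd p; rewrite d_eq0 // dvd0z => /eqP.
Qed.

Lemma resonance_order_diag : resonance_order x s.
Proof.
have [b_free [b_res _]] := resonance_Zbasis.
split; first by exists (fun i : 'I_s => (d i)%:Z *: stdvec n i).
move=> v v_res; apply: (not_Zfree_supported s_le_n) => i j s_le_j.
by have := proj1 (x_res _) (v_res i) j; rewrite d_eq0 // dvd0z => /eqP.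
Qed.

Lemma nonresonant_tail : nonresonant (\col_(j < n - s) (coords x)`_(s + j)).
Proof.
move=> k' k'_res; apply/matrixP => j q; rewrite (ord1 q) mxE.
pose k := \sum_(j < n - s) k' j 0 *: stdvec n (s + j).
have /x_res k_dvd : in_resonance x k.
  rewrite /in_resonance; suff -> : dotZ k x = dotZ k' (\col_(j < n - s) (coords x)`_(s + j)) by [].
  rewrite (big_morph (fun k1 => dotZ k1 x) (fun k1 k2 => dotZD k1 k2 x) (dotZ0 x)).
  by apply: eq_bigr => j' _; rewrite dotZ_stdvec mxE.
have sj_lt : (s + j < n)%N by rewrite -ltn_subRL.
have := k_dvd (Ordinal sj_lt); rewrite d_eq0 ?leq_addr // dvd0z sum_stdvec_coord.
by rewrite (big_pred1 j) ?eqn_add2l => [/eqP|j'] //=; rewrite eqn_add2l.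
Qed.

Section Head.
Hypotheses (s_gt0 : (0 < s)%N) (d_dvd : forall i j, (i <= j)%N -> (d i %| d j)%N).

Lemma head_int_multiple (T : nat) :
  (forall i : 'I_n, (i < s)%N -> T%:R * x i 0 \is a Num.int) <-> (d s.-1 %| T)%N.
Proof.
have last_lt : (s.-1 < n)%N by rewrite (leq_trans _ s_le_n) // prednK.
split=> [x_int | dT i i_lt_s].
  by apply/(resonance_coord (Ordinal last_lt) T%:Z); apply: x_int; rewrite /= prednK.
apply/(resonance_coord i T%:Z); apply: dvdn_trans (d_dvd _) dT.
by rewrite -ltnS prednK.
Qed.

Lemma d_last_gt0 : (0 < d s.-1)%N.
Proof. by rewrite d_gt0 ?prednK // (leq_trans _ s_le_n) // prednK. Qed.

Lemma head_period : exists a : 'I_s -> int,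
  (forall i : 'I_s, (coords x)`_i = (a i)%:~R / (d s.-1)%:R) /\
  is_period (\col_(i < s) ((a i)%:~R / (d s.-1)%:R : R)) (d s.-1).
Proof.
set T := d s.-1; pose y (i : 'I_s) : R := x (widen_ord s_le_n i) 0.
have yE i : y i = (Num.floor (T%:R * y i))%:~R / T%:R.
  apply: floor_divE d_last_gt0 _; rewrite /y.
  by apply: (proj2 (head_int_multiple T)) => /=.
exists (fun i => Num.floor (T%:R * y i)); split=> [i|].
  by rewrite -yE (coordsE x (widen_ord s_le_n i)).
apply: is_period_dvd d_last_gt0 _ => T'; rewrite -head_int_multiple.
split=> [y_int i i_lt_s | x_int i].
  have := y_int (Ordinal i_lt_s); rewrite mxE -yE /y.
  by congr (_ \is a _); congr (_ * x _ _); apply: val_inj.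
by rewrite mxE -yE; exact: x_int (widen_ord s_le_n i) (ltn_ord i).
Qed.

End Head.

Lemma rational_vec_diag : rational_vec x <-> s = n.
Proof.
split=> [x_rat | s_eq_n i].
  apply/eqP; rewrite eqn_leq s_le_n leqNgt; apply/negP => s_lt_n.
  have [q xq] := x_rat (Ordinal s_lt_n).
  have : ((d s)%:Z %| denq q)%Z.
    apply/(resonance_coord (Ordinal s_lt_n)); rewrite xq -(ratr_int R (denq q)) -rmorphM /=.
    by rewrite mulrC -numqE ratr_int intr_int.
  by rewrite (d_eq0 (i := Ordinal s_lt_n)) // dvd0z (negbTE (denq_neq0 q)).
have di_gt0 : (0 < d i)%N by rewrite d_gt0 // s_eq_n.
exists ((Num.floor ((d i)%:R * x i 0))%:~R / (d i)%:R).
rewrite fmorph_div /= ratr_int ratr_nat.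
by apply: floor_divE di_gt0 _; apply/(resonance_coord i (d i)).
Qed.

Lemma coords_irreducible : s = n -> exists a : 'I_n -> int, forall i : 'I_n,
  (coords x)`_i = (a i)%:~R / (d i)%:R /\ coprimez (a i) (d i).
Proof.
move=> s_eq_n; exists (fun i : 'I_n => Num.floor ((d i)%:R * x i 0)) => i.
have di_gt0 : (0 < d i)%N by rewrite d_gt0 // s_eq_n.
rewrite coordsE; split; last exact: coprimez_floor di_gt0 (resonance_coord i).
by apply: floor_divE di_gt0 _; apply/(resonance_coord i (d i)).
Qed.

End DiagonalResonance.

Theorem proposition3p3 (R : realType) (n r : nat) (w : 'cV[R]_n) :
  resonant w -> resonance_order w r -> (1 <= r)%N ->
  exists (A : 'M[int]_n) (d : nat -> nat),
    A \in unitmx /\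
    (forall i : nat, (i < r)%N -> (0 < d i)%N) /\
    (forall i : nat, (i.+1 < r)%N -> (d i %| d i.+1)%N) /\
    is_Zbasis (in_resonance (actZ A w)) (fun i : 'I_r => (d i)%:Z *: stdvec n i) /\
    (exists (a : 'I_r -> int) (w' : 'cV[R]_(n - r)),
        (forall i : 'I_r, (coords (actZ A w))`_i = (a i)%:~R / (d r.-1)%:R) /\
        (forall j : 'I_(n - r), (coords (actZ A w))`_(r + j) = w' j 0) /\
        nonresonant w' /\
        is_period (\col_(i < r) ((a i)%:~R / (d r.-1)%:R : R)) (d r.-1)) /\
    (rational_vec w <-> r = n) /\
    (rational_vec w ->
       is_period w (d n.-1) /\
       exists a : 'I_n -> int, forall i : 'I_n,
         (coords (actZ A w))`_i = (a i)%:~R / (d i)%:R /\ coprimez (a i) (d i)).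
Proof.
move=> _ w_order r_gt0.
have [A [d [A_unit d_dvd x_res]]] := resonance_Smith w.
set x := actZ A w in x_res *.
have [s s_le_n d_gt0] := dvdn_chain_pos_prefix n d_dvd.
have r_eq_s : r = s.
  apply: subgroup_rank_unique (resonance_order_actZ A_unit w_order) _.
  exact: resonance_order_diag s_le_n d_gt0 x_res.
subst r.
have [a [head_coords head_per]] := head_period s_le_n d_gt0 x_res r_gt0 d_dvd.
exists A, d; split=> //; split=> [i i_lt_s | ].
  by rewrite d_gt0 // (leq_trans i_lt_s s_le_n).
split=> [i _ | ]; first exact: d_dvd.
split; first exact: resonance_Zbasis s_le_n d_gt0 x_res.
split.
  exists a, (\col_(j < n - s) (coords x)`_(s + j)); split=> //.
  by split=> [j | ]; rewrite ?mxE //; split=> //; apply: nonresonant_tail d_gt0 x_res.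
rewrite -(rational_vec_actZ w A_unit) (rational_vec_diag s_le_n d_gt0 x_res).
split=> // s_eq_n; split; last exact: coords_irreducible d_gt0 x_res s_eq_n.
have dn_gt0 : (0 < d n.-1)%N by rewrite -s_eq_n; apply: d_last_gt0 s_le_n d_gt0 r_gt0.
apply: is_period_dvd dn_gt0 _ => T.
have := head_int_multiple s_le_n x_res r_gt0 d_dvd T; rewrite s_eq_n => <-.
rewrite -(int_multiple_actZ w T%:R A_unit).
by split=> [x_int i _ | x_int i]; apply: x_int.
Qed.
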